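(* Let $C$ be a projective linear code of length $n$ over $\mathbb{Z}_4$ of type $4^{k_1}2^{k_2}$ with exactly two nonzero Lee weights, and let $G\in\mathbb{Z}_4^{(k_1+k_2)\times n}$ be a generator matrix of $C$. If $C$ is Plotkin-optimal, then $w_L(\mathbf{x}G)=n$ for all $\mathbf{x}\in\mathbb{Z}_4^{k_1+k_2}\setminus(2\mathbb{Z}_4)^{k_1+k_2}$.
   Context: A linear code of length $n$ over $\mathbb{Z}_4$ is a $\mathbb{Z}_4$-submodule of $\mathbb{Z}_4^n$, of type $4^{k_1}2^{k_2}$ if isomorphic to $\mathbb{Z}_4^{k_1}\times\mathbb{Z}_2^{k_2}$. A generator matrix is a matrix whose rows generate the code and no proper subset of whose rows does. Lee weight: $w_L(0)=0,w_L(1)=1,w_L(2)=2,w_L(3)=1$, additive on vectors. Plotkin-optimal: minimum nonzero Lee weight equals $\lfloor\frac{|C|}{|C|-1}n\rfloor$. Projective: the dual with respect to $\sum x_iy_i\in\mathbb{Z}_4$ has minimum Lee distance at least $3$. $2\mathbb{Z}_4=\{0,2\}$. *)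

From HB Require Import structures.
From mathcomp Require Import all_boot all_order all_algebra.
Set Implicit Arguments. Unset Strict Implicit. Unset Printing Implicit Defensive.
Import GRing.Theory.
Local Open Scope ring_scope.

Definition leeZ4 (a : 'Z_4) : nat := minn (val a) (4 - val a).

Definition lee_wt n (v : 'rV['Z_4]_n) : nat := (\sum_(i < n) leeZ4 (v ord0 i))%N.

Definition Z4_linear_code n (C : {set 'rV['Z_4]_n}) : Prop :=
  0 \in C /\ (forall u v, u \in C -> v \in C -> u + v \in C)
  /\ (forall (a : 'Z_4) v, v \in C -> a *: v \in C).

(* C is of type 4^k1 2^k2: isomorphic (as Z4-module / abelian group)
   to Z4^k1 x Z2^k2 *)
Definition Z4_code_type n (C : {set 'rV['Z_4]_n}) (k1 k2 : nat) : Prop :=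
  exists f : 'rV['Z_4]_k1 * 'rV['Z_2]_k2 -> 'rV['Z_4]_n,
    [/\ (forall x y, f (x.1 + y.1, x.2 + y.2) = f x + f y),
        injective f &
        (forall v, v \in C <-> exists x, f x = v)].

Definition two_lee_weights n (C : {set 'rV['Z_4]_n}) : Prop :=
  exists w1 w2 : nat, [/\ w1 <> w2,
    (forall c, c \in C -> c != 0 -> lee_wt c = w1 \/ lee_wt c = w2),
    (exists2 c, c \in C /\ c != 0 & lee_wt c = w1) &
    (exists2 c, c \in C /\ c != 0 & lee_wt c = w2)].

Definition Z4_dual n (C : {set 'rV['Z_4]_n}) : {set 'rV['Z_4]_n} :=
  [set y : 'rV['Z_4]_n | [forall c in C, (\sum_(i < n) c ord0 i * y ord0 i) == 0]].

Definition projective n (C : {set 'rV['Z_4]_n}) : Prop :=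
  forall y z, y \in Z4_dual C -> z \in Z4_dual C -> y != z ->
    (3 <= lee_wt (y - z))%N.

Definition min_nonzero_lee n (C : {set 'rV['Z_4]_n}) (d : nat) : Prop :=
  (exists2 c, c \in C /\ c != 0 & lee_wt c = d) /\
  (forall c, c \in C -> c != 0 -> (d <= lee_wt c)%N).

Definition plotkin_optimal n (C : {set 'rV['Z_4]_n}) : Prop :=
  min_nonzero_lee C ((#|C| * n) %/ (#|C| - 1))%N.

Definition rows_span m n (G : 'M['Z_4]_(m, n)) (S : {set 'I_m})
  : {set 'rV['Z_4]_n} :=
  [set x *m G | x in [set x : 'rV['Z_4]_m | [forall i, (i \notin S) ==> (x ord0 i == 0)]]].

Definition generator_matrix m n (G : 'M['Z_4]_(m, n)) (C : {set 'rV['Z_4]_n})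
  : Prop :=
  rows_span G setT = C /\
  (forall S : {set 'I_m}, S \proper setT -> rows_span G S != C).

Definition in2Z4 (a : 'Z_4) : bool := (a == 0) || (a == 2%:R).

From HB Require Import structures.
From mathcomp Require Import all_boot all_order all_algebra.
Import GRing.Theory.
Local Open Scope ring_scope.

(* Let X be the set of messages x outside (2Z4)^(k1+k2).  Minimality of the
   generator matrix makes xG nonzero for x in X, so Plotkin-optimality gives
   w_L(xG) >= n.  Projectivity forces every column of G to contain a unit
   u = G i j (otherwise 2e_j is a dual word of Lee weight 2), and translating
   x by 2e_i is a bijection of X that adds 2 to the j-th coordinate of xG;
   since w_L(a) + w_L(a + 2) = 2, the j-th coordinates of xG contribute |X| to
   the total weight over X.  Hence the weights w_L(xG), x in X, are at least n
   and average to n, so they all equal n. *)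

Lemma unitZ4_sqr (a : 'Z_4) : ~~ in2Z4 a -> a * a = 1.
Proof. by case: a => [[|[|[|[|]]]] ?] // _; apply/eqP. Qed.

Lemma mul2_unitZ4 (a : 'Z_4) : ~~ in2Z4 a -> 2%:R * a = 2%:R.
Proof. by case: a => [[|[|[|[|]]]] ?] // _; apply/eqP. Qed.

Lemma mulr2_eq0_Z4 (a : 'Z_4) : (a * 2%:R == 0) = in2Z4 a.
Proof. by case: a => [[|[|[|[|]]]] ?]. Qed.

Lemma in2Z4_add2 (a : 'Z_4) : in2Z4 (a + 2%:R) = in2Z4 a.
Proof. by case: a => [[|[|[|[|]]]] ?]. Qed.

Lemma leeZ4_add2 (a : 'Z_4) : (leeZ4 a + leeZ4 (a + 2%:R)%R = 2)%N.
Proof. by case: a => [[|[|[|[|]]]] ?]. Qed.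

Definition twice_delta {n} (j : 'I_n) : 'rV['Z_4]_n :=
  \row_l (if l == j then 2%:R else 0).

Lemma lee_wt_twice_delta {n} (j : 'I_n) : lee_wt (twice_delta j) = 2%N.
Proof.
rewrite /lee_wt (bigD1 j) //= big1 => [|l /negbTE ljF]; last by rewrite mxE ljF.
by rewrite mxE eqxx.
Qed.

Lemma twice_delta_mulmx {m n} (i : 'I_m) (G : 'M['Z_4]_(m, n)) j :
  (twice_delta i *m G) ord0 j = 2%:R * G i j.
Proof.
rewrite mxE (bigD1 i) //= big1 => [|l /negbTE liF]; last by rewrite mxE liF mul0r.
by rewrite mxE eqxx addr0.
Qed.

Lemma zero_in_Z4_dual {n} (C : {set 'rV['Z_4]_n}) : 0 \in Z4_dual C.
Proof.
rewrite inE; apply/forall_inP => c _.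
by apply/eqP/big1 => l _; rewrite mxE mulr0.
Qed.

Lemma twice_delta_in_Z4_dual {n} {C : {set 'rV['Z_4]_n}} j :
  (forall c, c \in C -> c ord0 j * 2%:R = 0) -> twice_delta j \in Z4_dual C.
Proof.
move=> Cj2; rewrite inE; apply/forall_inP => c cC.
rewrite (bigD1 j) //= big1 => [|l /negbTE ljF]; last by rewrite mxE ljF mulr0.
by rewrite mxE eqxx addr0 Cj2.
Qed.

Lemma projective_coord_mul2 {n} {C : {set 'rV['Z_4]_n}} j :
  projective C -> exists2 c, c \in C & c ord0 j * 2%:R != 0.
Proof.
move=> projC; apply/exists_inP; apply: contraT => /exists_inPn Cj2.
have twice_dual : twice_delta j \in Z4_dual C.
  by apply: twice_delta_in_Z4_dual => c /Cj2/negPn/eqP.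
have twice_neq0 : twice_delta j != 0.
  by apply/eqP => /matrixP/(_ ord0 j); rewrite !mxE eqxx.
have := projC _ _ twice_dual (zero_in_Z4_dual C) twice_neq0.
by rewrite subr0 lee_wt_twice_delta.
Qed.

Lemma mulmx_in_rows_span {m n} (G : 'M['Z_4]_(m, n)) y :
  y *m G \in rows_span G setT.
Proof. by apply/imsetP; exists y => //; rewrite inE; apply/forallP => i; rewrite in_setT. Qed.

Lemma projective_col_unit {m n} {G : 'M['Z_4]_(m, n)} j :
  projective (rows_span G setT) -> exists i, ~~ in2Z4 (G i j).
Proof.
move=> projG; have [_ /imsetP[y _ ->] yGj] := projective_coord_mul2 j projG.
apply/existsP; apply: contraNT yGj => /existsPn G2j.
rewrite mxE mulr_suml; apply/eqP/big1 => i _.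
by rewrite -mulrA; move: (G2j i); rewrite negbK -mulr2_eq0_Z4 => /eqP ->; rewrite mulr0.
Qed.

(* As y_i^2 = 1, z - (z_i y_i) y has i-th coordinate 0 and the same image as z. *)
Lemma rows_span_setTD1 {m n} {G : 'M['Z_4]_(m, n)} {y : 'rV['Z_4]_m} {i} :
  y *m G = 0 -> ~~ in2Z4 (y ord0 i) -> rows_span G (setT :\ i) = rows_span G setT.
Proof.
move=> yG0 yi; apply/setP => c; apply/imsetP/imsetP => -[z _ ->].
  by exists z => //; rewrite inE; apply/forallP => l; rewrite in_setT.
exists (z - (z ord0 i * y ord0 i) *: y).
  rewrite inE; apply/forallP => l; apply/implyP.
  rewrite !inE andbT negbK => /eqP ->.
  by rewrite !mxE -mulrA unitZ4_sqr ?mulr1 ?subrr.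
by rewrite mulmxBl -scalemxAl yG0 scaler0 subr0.
Qed.

Lemma generator_matrix_mulmx_neq0 {m n} {G : 'M['Z_4]_(m, n)} {C} {y : 'rV['Z_4]_m} {i} :
  generator_matrix G C -> ~~ in2Z4 (y ord0 i) -> y *m G != 0.
Proof.
move=> [spanG minG] yi; apply/eqP => yG0.
have /negP[] := minG _ (properD1 (in_setT i)).
by rewrite (rows_span_setTD1 yG0 yi) spanG.
Qed.

Lemma leq_plotkin_bound N n : (1 < N)%N -> (n <= N * n %/ (N - 1))%N.
Proof.
move=> N_gt1; rewrite leq_divRL ?subn_gt0 //.
by rewrite [leqRHS]mulnC leq_mul2l leq_subr orbT.
Qed.

Lemma plotkin_optimal_lee_wt_ge {n} {C : {set 'rV['Z_4]_n}} {c} :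
  plotkin_optimal C -> 0 \in C -> c \in C -> c != 0 -> (n <= lee_wt c)%N.
Proof.
move=> [_ minC] C0 cC c_neq0; apply: leq_trans (minC _ cC c_neq0).
by apply/leq_plotkin_bound/card_gt1P; exists 0, c; rewrite eq_sym.
Qed.

Lemma sum_leeZ4_shift2 {V : finZmodType} {X : {set V}} {e : V} {f : V -> 'Z_4} :
  (forall y, (y + e \in X) = (y \in X)) -> (forall y, f (y + e) = f y + 2%:R) ->
  (\sum_(y in X) leeZ4 (f y))%N = #|X|.
Proof.
move=> Xe fe.
have shift : (\sum_(y in X) leeZ4 (f y) = \sum_(y in X) leeZ4 (f y + 2%:R)%R)%N.
  by rewrite (reindex_inj (addIr e)); apply: eq_big => y; rewrite ?Xe ?fe.
apply/eqP; rewrite -(@eqn_pmul2r 2) // -sum_nat_const muln2 -addnn {2}shift.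
by rewrite -big_split; apply/eqP/eq_bigr => y _; apply: leeZ4_add2.
Qed.

Definition outside_2Z4 m : {set 'rV['Z_4]_m} :=
  [set y : 'rV['Z_4]_m | [exists i, ~~ in2Z4 (y ord0 i)]].

Lemma outside_2Z4_addr_twice_delta {m} (i : 'I_m) y :
  (y + twice_delta i \in outside_2Z4 m) = (y \in outside_2Z4 m).
Proof.
rewrite !inE; apply: eq_existsb => l; rewrite !mxE.
by case: (l == i); rewrite ?addr0 ?in2Z4_add2.
Qed.

Lemma sum_lee_wt_outside_2Z4 {m n} {G : 'M['Z_4]_(m, n)} :
  (forall j, exists i, ~~ in2Z4 (G i j)) ->
  (\sum_(y in outside_2Z4 m) lee_wt (y *m G) = #|outside_2Z4 m| * n)%N.
Proof.
move=> colG; rewrite /lee_wt exchange_big /= (eq_bigr (fun=> #|outside_2Z4 m|)).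
  by rewrite sum_nat_const card_ord mulnC.
move=> j _; have [i Gij] := colG j.
apply: (sum_leeZ4_shift2 (e := twice_delta i)); first exact: outside_2Z4_addr_twice_delta.
by move=> y; rewrite mulmxDl mxE twice_delta_mulmx mul2_unitZ4.
Qed.

Lemma sum_nat_lb_eq {I : finType} {X : {set I}} {F : I -> nat} {n} :
  (forall y, y \in X -> n <= F y)%N -> (\sum_(y in X) F y = #|X| * n)%N ->
  forall y, y \in X -> F y = n.
Proof.
move=> lbF sumF y yX.
have /leqif_sum[_] : forall z, z \in X -> (n <= F z ?= iff (n == F z))%N.
  by move=> z /lbF; split.
by rewrite sum_nat_const sumF eqxx => /esym/forall_inP/(_ y yX)/eqP.
Qed.

Theorem corollary4p5 (n k1 k2 : nat) (C : {set 'rV['Z_4]_n})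
  (G : 'M['Z_4]_(k1 + k2, n)) :
  Z4_linear_code C -> Z4_code_type C k1 k2 -> projective C ->
  two_lee_weights C -> generator_matrix G C ->
  plotkin_optimal C ->
  forall x : 'rV['Z_4]_(k1 + k2), (exists i, ~~ in2Z4 (x ord0 i)) ->
    lee_wt (x *m G) = n.
Proof.
move=> [C0 _] _ projC _ genG plotkin x [i xi].
have [spanG _] := genG.
have lbG y : y \in outside_2Z4 (k1 + k2) -> (n <= lee_wt (y *m G))%N.
  rewrite inE => /existsP[l yl].
  apply: plotkin_optimal_lee_wt_ge plotkin C0 _ _.
    by rewrite -spanG mulmx_in_rows_span.
  exact: generator_matrix_mulmx_neq0 genG yl.
have colG j : exists i, ~~ in2Z4 (G i j).
  by apply: projective_col_unit; rewrite spanG.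
apply: (sum_nat_lb_eq lbG (sum_lee_wt_outside_2Z4 colG)).
by rewrite inE; apply/existsP; exists i.
Qed.
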